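(* For every $\delta>0$ there exist $n\ge1$, a pool $\mathcal D=\{(p_i,t_i)\}_{i=1}^n$ with $p_i\in[0,1]$, $t_i>0$, and a budget $T>0$, such that the greedy forward selection strategy (defined in the context) outputs an ensemble $S$ with majority-voting accuracy $q(S)\le 1/2+\delta$, while there is an index set $\mathcal L\subseteq\{1,\dots,n\}$ with $\sum_{i\in\mathcal L}t_i\le T$ and $q(\mathcal L)\ge 1-\delta$. In other words, the difference between the optimal constrained ensemble accuracy and the accuracy produced by greedy forward selection can be arbitrarily close to $1/2$.
   Context: A pool consists of candidate members $i=1,\dots,n$, each with accuracy $p_i\in[0,1]$ and cost $t_i>0$; a budget $T>0$ is given. For a nonempty index set $\mathcal L$ with $|\mathcal L|=\ell$, the (majority voting) accuracy is $q(\mathcal L)=\sum_{k=\lfloor \ell/2\rfloor+1}^{\ell}\sum_{\mathcal I\subseteq\mathcal L,|\mathcal I|=k}\prod_{i\in\mathcal I}p_i\prod_{j\in\mathcal L\setminus\mathcal I}(1-p_j)$. An index set $\mathcal L$ is feasible if $\sum_{i\in\mathcal L}t_i\le T$. Greedy forward selection: start with $S$ consisting of a single member of maximal accuracy $p_i$; then repeatedly, among the members $j\notin S$ with $\sum_{i\in S}t_i+t_j\le T$, take one maximizing $q(S\cup\{j\})$; if this value is strictly larger than $q(S)$, add $j$ to $S$ and continue, otherwise (or if no such $j$ exists) stop and output $S$. *)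

From HB Require Import structures.
From mathcomp Require Import all_boot all_order all_algebra.
From mathcomp Require Import reals.
Set Implicit Arguments. Unset Strict Implicit. Unset Printing Implicit Defensive.
Import Order.TTheory GRing.Theory Num.Theory.
Local Open Scope ring_scope.

Section Ensemble.
Variables (R : realType) (n : nat) (p t : 'I_n -> R) (T : R).

Definition mv_acc (L : {set 'I_n}) : R :=
  let l := #|L| in
  \sum_((l./2).+1 <= k < l.+1)
    \sum_(I : {set 'I_n} | (I \subset L) && (#|I| == k))
      (\prod_(i in I) p i) * (\prod_(j in L :\: I) (1 - p j)).

Definition cost (L : {set 'I_n}) : R := \sum_(i in L) t i.

Definition candidate (S : {set 'I_n}) (j : 'I_n) : Prop :=
  j \notin S /\ cost S + t j <= T.

Definition greedy_step (S S' : {set 'I_n}) : Prop :=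
  exists j, candidate S j /\
    (forall j', candidate S j' -> mv_acc (j' |: S) <= mv_acc (j |: S)) /\
    mv_acc S < mv_acc (j |: S) /\ S' = j |: S.

Definition greedy_stop (S : {set 'I_n}) : Prop :=
  forall j, candidate S j -> mv_acc (j |: S) <= mv_acc S.

Inductive greedy_reach (S0 : {set 'I_n}) : {set 'I_n} -> Prop :=
| greedy_reach_refl : greedy_reach S0 S0
| greedy_reach_step S S' : greedy_reach S0 S -> greedy_step S S' -> greedy_reach S0 S'.

(* S is a possible output of greedy forward selection (any tie-breaking) *)
Definition greedy_output (S : {set 'I_n}) : Prop :=
  exists i0, (forall i, p i <= p i0) /\ greedy_reach [set i0] S /\ greedy_stop S.

End Ensemble.

From mathcomp Require Import all_boot all_order all_algebra.
From mathcomp Require Import reals.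
From mathcomp Require Import ring lra zify.
Import Order.TTheory GRing.Theory Num.Theory.
Local Open Scope ring_scope.

(* Take 2k+1 identical members of accuracy c = 1/2 + e, unit costs and budget
   2k+1.  Under majority voting a pair is correct only when both members are,
   so from a singleton {i} every candidate gives q({i, j}) = p_i p_j <= p_i:
   greedy selection never leaves its first member and achieves only c.  The
   whole pool is affordable, and its vote fails only on the at most 2^(2k+1)
   outcomes with a correct minority, each of probability at most
   (c (1 - c))^k; hence q >= 1 - 2 (4 c (1 - c))^k, which tends to 1 because
   4 c (1 - c) = 1 - 4 e^2 < 1. *)

Lemma sum_nat_fibers (R : nmodType) (I : finType) (P : pred I) (w : I -> nat)
    (F : I -> R) (a b : nat) :
  \sum_(a <= k < b) \sum_(i | P i && (w i == k)) F i =
  \sum_(i | P i && (a <= w i < b)%N) F i.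
Proof.
under eq_bigr do rewrite big_mkcond.
rewrite exchange_big [RHS]big_mkcond; apply: eq_bigr => i _ /=.
case: (P i); last by rewrite big1.
by rewrite -big_mkcond /= (eq_bigl (fun k => k == w i)) ?big_nat1_eq.
Qed.

Lemma prodr_in_set_if (R : comNzRingType) (I : finType) (J : {set I}) (c d : R) :
  \prod_i (if i \in J then c else d) = c ^+ #|J| * d ^+ #|~: J|.
Proof.
rewrite (bigID (mem J)) /= (eq_bigr (fun=> c)) => [|i ->//].
rewrite [X in _ * X](eq_bigr (fun=> d)) => [|i /negbTE-> //].
rewrite !prodr_const; congr (_ * _ ^+ _); apply: eq_card => i; by rewrite !inE.
Qed.

Lemma binomial_sum_sets (R : comNzRingType) (n : nat) (c d : R) :
  \sum_(J : {set 'I_n}) c ^+ #|J| * d ^+ #|~: J| = (c + d) ^+ n.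
Proof.
have := bigA_distr 1 +%R (fun _ : 'I_n => c) (fun _ => d).
rewrite prodr_const card_ord => ->.
by apply: eq_bigr => J _; rewrite prodr_in_set_if.
Qed.

Section MajorityVote.
Variables (R : realType) (n : nat) (p : 'I_n -> R).

Lemma mv_accE (L : {set 'I_n}) :
  mv_acc p L = \sum_(I : {set 'I_n} | (I \subset L) && (#|L|./2 < #|I|)%N)
                 (\prod_(i in I) p i) * \prod_(j in L :\: I) (1 - p j).
Proof.
rewrite /mv_acc sum_nat_fibers; apply: eq_bigl => I.
by case: (boolP (I \subset L)) => //= /subset_leq_card; rewrite ltnS => ->; rewrite andbT.
Qed.

Lemma mv_acc_unanimity (L : {set 'I_n}) :
  (0 < #|L| <= 2)%N -> mv_acc p L = \prod_(i in L) p i.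
Proof.
move=> L12; rewrite mv_accE (big_pred1 L) => [|I /=].
  by rewrite setDv big_set0 mulr1.
rewrite eqEcard; case: (I \subset L) => //=; move: L12; move: #|L| #|I| => l m; lia.
Qed.

Lemma mv_acc_set1 (i : 'I_n) : mv_acc p [set i] = p i.
Proof. by rewrite mv_acc_unanimity ?cards1 // big_set1. Qed.

Lemma mv_acc_setU1_set1 (i j : 'I_n) :
  j != i -> mv_acc p (j |: [set i]) = p j * p i.
Proof.
rewrite -in_set1 => ji; rewrite mv_acc_unanimity ?cardsU1 ?ji ?cards1 //.
by rewrite big_setU1 //= big_set1.
Qed.

End MajorityVote.

Section GreedyFromSingleton.
Variables (R : realType) (n : nat) (p t : 'I_n -> R) (T : R).
Hypothesis p01 : forall i, 0 <= p i <= 1.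

Lemma mv_acc_setU1_set1_le (i j : 'I_n) :
  mv_acc p (j |: [set i]) <= mv_acc p [set i].
Proof.
have [->|ji] := eqVneq j i; first by rewrite setUid.
rewrite mv_acc_setU1_set1 // mv_acc_set1.
by have /andP[? ?] := p01 i; have /andP[? ?] := p01 j; rewrite ler_piMl.
Qed.

Lemma greedy_reach_set1 (i : 'I_n) S : greedy_reach p t T [set i] S -> S = [set i].
Proof.
elim=> // S1 S2 _ -> [j [_ [_ [improves _]]]].
by move: improves; rewrite ltNge mv_acc_setU1_set1_le.
Qed.

Lemma greedy_stop_set1 (i : 'I_n) : greedy_stop p t T [set i].
Proof. by move=> j _; apply: mv_acc_setU1_set1_le. Qed.

Lemma greedy_outputP S :
  greedy_output p t T S <-> exists2 i, (forall j, p j <= p i) & S = [set i].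
Proof.
split=> [[i [imax [/greedy_reach_set1 -> _]]] | [i imax ->]]; first by exists i.
by exists i; split; [|split; [exact: greedy_reach_refl | exact: greedy_stop_set1]].
Qed.

End GreedyFromSingleton.

Lemma expr_minority_le (R : numDomainType) (c d : R) (a b k : nat) :
  0 <= d <= c -> d <= 1 -> (a <= k)%N -> (a + b = k.*2.+1)%N ->
  c ^+ a * d ^+ b <= (c * d) ^+ k.
Proof.
move=> /andP[d0 dc] d1 ak ab; set m := (k - a)%N.
have -> : b = (a + 2 * m).+1 by rewrite /m; lia.
have -> : k = (a + m)%N by rewrite /m; lia.
rewrite exprS exprD exprM mulrCA [c ^+ a * _]mulrA -exprMn mulrCA [X in _ <= X]exprD.
have c0 : 0 <= c := le_trans d0 dc.
apply: ler_wpM2l; first by rewrite exprn_ge0 ?mulr_ge0.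
apply: le_trans (ler_piMl _ d1) _; first by rewrite !exprn_ge0.
by rewrite lerXn2r ?nnegrE ?exprn_ge0 ?mulr_ge0 // expr2 ler_wpM2r.
Qed.

Section ConstantPool.
Variables (R : realType) (c : R).

Lemma mv_acc_const_setT (n : nat) :
  mv_acc (fun _ : 'I_n => c) [set: 'I_n] =
  \sum_(I : {set 'I_n} | (n./2 < #|I|)%N) c ^+ #|I| * (1 - c) ^+ #|~: I|.
Proof.
rewrite mv_accE cardsT card_ord.
by apply: eq_big => [I | I _]; rewrite ?subsetT // !prodr_const setTD.
Qed.

Lemma mv_acc_const_setT_ge (k : nat) : 1 / 2 <= c <= 1 ->
  1 - 2 * (4 * (c * (1 - c))) ^+ k <= mv_acc (fun _ : 'I_k.*2.+1 => c) [set: _].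
Proof.
move=> /andP[c_ge c_le]; rewrite mv_acc_const_setT.
have -> : (k.*2.+1)./2 = k by lia.
set n := k.*2.+1; set F := fun I : {set 'I_n} => c ^+ #|I| * (1 - c) ^+ #|~: I|.
have total : \sum_(I : {set 'I_n}) F I = 1 by rewrite binomial_sum_sets subrKC expr1n.
have minority : \sum_(I : {set 'I_n} | ~~ (k < #|I|)%N) F I <= 2 ^+ n * (c * (1 - c)) ^+ k.
  have card_sets : #|{set 'I_n}| = (2 ^ n)%N.
    by rewrite -cardsT -powersetT card_powerset cardsT card_ord.
  rewrite -natrX -card_sets mulr_natl -sumr_const big_mkcond /=.
  apply: ler_sum => I _; case: ifP => [|_]; last by rewrite exprn_ge0 // mulr_ge0 //; lra.
  rewrite -leqNgt => I_minor.
  apply: expr_minority_le => //; first (by apply/andP; split; lra); first lra.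
  by rewrite cardsC card_ord.
have powers : 2 ^+ n * (c * (1 - c)) ^+ k = 2 * (4 * (c * (1 - c))) ^+ k.
  by rewrite exprS -mul2n exprM exprMn -mulrA -!exprMn; congr (2 * (_ ^+ k)); ring.
move: total minority; rewrite (bigID (fun I : {set 'I_n} => (k < #|I|)%N)) /= powers; lra.
Qed.

End ConstantPool.

Lemma bernoulli_ineq {R : realDomainType} (x : R) (k : nat) :
  0 <= x -> 1 + x *+ k <= (1 + x) ^+ k.
Proof.
move=> x0; elim: k => [|k IH]; first by rewrite mulr0n addr0 expr0.
have xk : 0 <= x *+ k := mulrn_wge0 k x0.
rewrite exprS mulrSr; apply: le_trans (ler_wpM2l _ IH); nra.
Qed.

Lemma exists_expr_le (R : realType) (x eps : R) :
  0 <= x < 1 -> 0 < eps -> exists k, x ^+ k <= eps.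
Proof.
move=> /andP[x0 x1] eps0; set s := 1 - x.
have s0 : 0 < s by rewrite /s; lra.
have /archi_boundP : 0 <= 1 / (s * eps) by rewrite divr_ge0 // ltW ?mulr_gt0.
set k := Num.bound _; rewrite ltr_pdivrMr ?mulr_gt0 // => big_k.
exists k; set X := x ^+ k; set K : R := k%:R.
have X0 : 0 <= X := exprn_ge0 k x0.
have XKs : X * (K * s) <= 1.
  have : (x * (1 + s)) ^+ k <= 1 by rewrite exprn_ile1 ?mulr_ge0 //; rewrite /s; nra.
  rewrite exprMn => XB; apply: le_trans (ler_wpM2l X0 _) XB.
  by apply: le_trans (bernoulli_ineq s k (ltW s0)); rewrite mulr_natl lerDr.
nra.
Qed.

Theorem proposition1 (R : realType) (delta : R) : 0 < delta ->
  exists (n : nat) (p t : 'I_n -> R) (T : R),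
    [/\ (0 < n)%N,
        (forall i, 0 <= p i <= 1),
        (forall i, 0 < t i)
      & 0 < T] /\
    (exists S, greedy_output p t T S) /\
    (forall S, greedy_output p t T S -> mv_acc p S <= 1 / 2 + delta) /\
    exists L : {set 'I_n},
      [/\ L != set0, cost t L <= T & 1 - delta <= mv_acc p L].
Proof.
move=> delta0.
have [e [e0 e_half e_delta]] : exists e : R, [/\ 0 < e, e <= 1 / 2 & e <= delta].
  by case: (lerP delta (1 / 2)) => ?; [exists delta | exists (1 / 2)]; split; lra.
set c := 1 / 2 + e; have c01 : 0 <= c <= 1 by apply/andP; split; rewrite /c; lra.
have [k small] : exists k, (4 * (c * (1 - c))) ^+ k <= delta / 2.
  by apply: exists_expr_le; [apply/andP; split; rewrite /c; nra | lra].
exists k.*2.+1, (fun _ => c), (fun _ => 1), k.*2.+1%:R.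
split; first by split=> // _; exact: ltr01.
split; first by exists [set ord0]; apply/greedy_outputP => //; exists ord0.
split; first by move=> S /greedy_outputP[// | i _ ->]; rewrite mv_acc_set1 /c; lra.
exists setT; split.
- by apply/set0Pn; exists ord0; rewrite inE.
- by rewrite /cost sumr_const cardsT card_ord.
- apply: le_trans (mv_acc_const_setT_ge _ c k _); first lra.
  by apply/andP; split; rewrite /c; lra.
Qed.
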